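(* Let $d\geq 2$ and $0<a<b\leq d$ be integers, and let $\ell_d^{(a,b)}(\alpha,\lambda,n)$ be the number of partitions with perimeter $n$, largest part $\alpha$, exactly $\lambda$ parts, and all parts congruent to $a$ or $b$ modulo $d$. Then, as formal power series, $$\sum_{\alpha,\lambda,n\geq1}\ell_d^{(a,b)}(\alpha,\lambda,n)x^\alpha y^\lambda q^n=\frac{y\,(x^aq^a-x^ayq^{a+1}+x^bq^b)}{1-2yq+y^2q^2-x^dq^d},$$ and in particular $$\sum_{n\geq 1}\ell_d^{(a,b)}(n)q^n=\frac{q^a-q^{a+1}+q^b}{1-2q+q^2-q^d}.$$
   Context: A partition is a finite nonincreasing sequence of positive integers (its parts); its size is not fixed. The perimeter of a partition with largest part $\alpha$ and $\lambda$ parts is $\alpha+\lambda-1$. For $0<a<b\le d$, $\ell_d^{(a,b)}(n)$ is the number of partitions of perimeter $n$ all of whose parts are congruent to $a$ or $b$ modulo $d$. *)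

From mathcomp Require Import all_boot all_order all_algebra.
Set Implicit Arguments. Unset Strict Implicit. Unset Printing Implicit Defensive.
Import GRing.Theory Num.Theory.

Definition is_partition (s : seq nat) : bool :=
  all (fun p => 0 < p) s && sorted geq s.

Definition largest_part (s : seq nat) : nat := head 0 s.
Definition num_parts (s : seq nat) : nat := size s.
Definition perimeter (s : seq nat) : nat := largest_part s + num_parts s - 1.

Definition parts_ab (d a b : nat) (s : seq nat) : bool :=
  all (fun p => (p == a %[mod d]) || (p == b %[mod d])) s.

(* Such partitions
   are sequences of length lambda with entries <= alpha, hence are enumerated
   by lambda-tuples over 'I_(alpha.+1). *)
Definition ell3 (d a b alpha lam n : nat) : nat :=
  #|[set t : lam.-tuple 'I_alpha.+1 |
       let s := map val t in
       [&& is_partition s, largest_part s == alpha, perimeter s == n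
         & parts_ab d a b s]]|.

(* A partition of perimeter n has at most n parts (for n >= 1) and all parts
   at most n, so it is a lambda-tuple over 'I_(n.+1) for some lambda <= n. *)
Definition ell (d a b n : nat) : nat :=
  \sum_(lam < n.+1)
    #|[set t : lam.-tuple 'I_n.+1 |
         let s := map val t in
         [&& is_partition s, perimeter s == n & parts_ab d a b s]]|.

(* Trivariate series in x, y, q: coefficient of x^i y^j q^k. *)
Definition ps3 := nat -> nat -> nat -> int.

Definition mul3 (f g : ps3) : ps3 := fun i j k =>
  (\sum_(i1 < i.+1) \sum_(j1 < j.+1) \sum_(k1 < k.+1)
     f i1 j1 k1 * g (i - i1)%N (j - j1)%N (k - k1)%N)%R.

Definition add3 (f g : ps3) : ps3 := fun i j k => (f i j k + g i j k)%R.

Definition mono3 (c : int) (e1 e2 e3 : nat) : ps3 := fun i j k =>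
  if [&& i == e1, j == e2 & k == e3] then c else 0%R.

Definition ps1 := nat -> int.
Definition mul1 (f g : ps1) : ps1 := fun n =>
  (\sum_(k < n.+1) f k * g (n - k)%N)%R.
Definition add1 (f g : ps1) : ps1 := fun n => (f n + g n)%R.
Definition mono1 (c : int) (e : nat) : ps1 := fun n => if n == e then c else 0%R.

Definition gen3 (d a b : nat) : ps3 := fun i j k =>
  if [&& 0 < i, 0 < j & 0 < k] then ((ell3 d a b i j k)%:Z)%R else 0%R.

Definition den3 (d : nat) : ps3 :=
  add3 (mono3 1 0 0 0) (add3 (mono3 (-2) 0 1 1)
    (add3 (mono3 1 0 2 2) (mono3 (-1) d 0 d))).

Definition num3 (a b : nat) : ps3 :=
  add3 (mono3 1 a 1 a) (add3 (mono3 (-1) a 2 a.+1) (mono3 1 b 1 b)).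

Definition gen1 (d a b : nat) : ps1 := fun n =>
  if 0 < n then ((ell d a b n)%:Z)%R else 0%R.

Definition den1 (d : nat) : ps1 :=
  add1 (mono1 1 0) (add1 (mono1 (-2) 1) (add1 (mono1 1 2) (mono1 (-1) d))).

Definition num1 (a b : nat) : ps1 :=
  add1 (mono1 1 a) (add1 (mono1 (-1) a.+1) (mono1 1 b)).

From mathcomp Require Import all_boot all_order all_algebra zify.
From Stdlib Require Import FunctionalExtensionality.
Set Implicit Arguments. Unset Strict Implicit. Unset Printing Implicit Defensive.
Import GRing.Theory.

(* A partition with largest part i and j parts is the part i followed by a
   multiset of j - 1 admissible parts at most i; if N(i) positive admissible
   integers are at most i, there are 'C(N(i) + j - 2, j - 1) such partitions.
   Since N(i + d) = N(i) + 2, the second difference in j of these counts at i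
   is their value at i - d, i.e. (1 - y)^2 G(x, y) - x^d G(x, y) is the
   polynomial y (x^a - x^a y + x^b) left over by the initial cases i = a
   (N = 1) and i = b (N = 2).  The perimeter is i + j - 1, so the trivariate
   series is G(xq, yq) / q and the univariate one is its value at x = y = 1. *)

Lemma card_set_sum (T : finType) (P : pred T) : #|[set t | P t]| = \sum_t P t.
Proof. by rewrite -sum1dep_card big_mkcond; apply: eq_bigr => t _; case: (P t). Qed.

Lemma bin_second_difference n k :
  'C(n.+2, k.+2) + 'C(n, k) = 2 * 'C(n.+1, k.+1) + 'C(n, k.+2).
Proof. rewrite !binS; lia. Qed.

Definition count_tuples M l (Q : seq nat -> bool) : nat :=
  \sum_(t : l.-tuple 'I_M.+1) Q (map val t).

Lemma eq_count_tuples M l Q1 Q2 :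
  Q1 =1 Q2 -> count_tuples M l Q1 = count_tuples M l Q2.
Proof. by move=> eQ; apply: eq_bigr => t _; rewrite eQ. Qed.

Lemma count_tuples_andl M l (c : bool) Q :
  count_tuples M l (fun s => c && Q s) = c * count_tuples M l Q.
Proof. by case: c; rewrite ?mul1n // /count_tuples big1. Qed.

Lemma count_tuples_cons M l Q :
  count_tuples M l.+1 Q = \sum_(x < M.+1) count_tuples M l (fun s => Q (val x :: s)).
Proof.
rewrite /count_tuples pair_big /=.
rewrite (reindex (fun p : 'I_M.+1 * l.-tuple 'I_M.+1 => [tuple of p.1 :: p.2])) //.
exists (fun t : l.+1.-tuple 'I_M.+1 => (thead t, [tuple of behead t])).
  by move=> [x t] _ /=; rewrite theadE; congr pair; apply: val_inj.
by move=> t _ /=; rewrite [RHS]tuple_eta.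
Qed.

Definition diag_sum (f : nat -> nat -> nat) (s : nat) : nat :=
  \sum_(i < s.+1) f i (s - i).

Lemma diag_sum_subr (f : nat -> nat -> nat) k s : (forall i, f i 0 = 0) ->
  \sum_(i < s.+1) f i (s - i - k) = diag_sum f (s - k).
Proof.
move=> f_i0; have [le_ks|lt_sk] := leqP k s.
  have -> : s.+1 = (s - k).+1 + k by lia.
  rewrite big_split_ord /= [X in _ + X]big1 ?addn0 => [|i _]; last first.
    by rewrite (_ : _ - _ - _ = 0) ?f_i0 //; lia.
  by apply: eq_bigr => i _; congr f; lia.
rewrite (_ : s - k = 0); last lia.
rewrite /diag_sum big_ord1 f_i0 big1 // => i _.
by rewrite (_ : _ - _ - _ = 0) ?f_i0 //; lia.
Qed.

Lemma diag_sum_subl (f : nat -> nat -> nat) k s : (forall j, f 0 j = 0) ->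
  \sum_(i < s.+1) f (i - k) (s - i) = diag_sum f (s - k).
Proof.
move=> f_0j; have [le_ks|lt_sk] := leqP k s.
  have -> : s.+1 = k + (s - k).+1 by lia.
  rewrite big_split_ord /= big1 ?add0n => [|i _]; last first.
    by rewrite (_ : i - k = 0) ?f_0j //; have := ltn_ord i; lia.
  by apply: eq_bigr => i _; congr f; lia.
rewrite (_ : s - k = 0); last lia.
rewrite /diag_sum big_ord1 f_0j big1 // => i _.
by rewrite (_ : i - k = 0) ?f_0j //; have := ltn_ord i; lia.
Qed.

Lemma sum_diag_pulse e c s :
  \sum_(i < s.+1) ((i == e :> nat) && (s - i == c)) = (e + c == s).
Proof.
rewrite (eq_bigr (fun i : 'I_s.+1 => if i == e :> nat then (s - e == c : nat) else 0)).
  rewrite -big_mkcond (big_ord1_eq _ (fun=> (s - e == c : nat))) ltnS.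
  by case: leqP => le_es; [congr nat_of_bool; apply/eqP/eqP | apply/esym/eqP]; lia.
by move=> i _; case: eqP => [->|].
Qed.

Section Counting.

Variables d a b : nat.

Definition admissible (p : nat) : bool := (p == a %[mod d]) || (p == b %[mod d]).

Fixpoint ab_partition_le (m : nat) (s : seq nat) : bool :=
  if s is x :: s' then [&& 0 < x, x <= m, admissible x & ab_partition_le x s']
  else true.

Lemma ab_partition_leE m s :
  ab_partition_le m s = [&& is_partition s, parts_ab d a b s & head 0 s <= m].
Proof.
elim: s m => [|x s IH] m //=.
rewrite IH /is_partition /parts_ab /= -[admissible x]/(_ || _).
case: (0 < x); case: (x <= m); case: (_ || _); rewrite /= ?andbF // andbT.
by case: s {IH} => [|y s] //=; case: (y <= x); rewrite /= ?andbT ?andbF.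
Qed.

Lemma ab_partition_consE x s :
  is_partition (x :: s) && parts_ab d a b (x :: s)
  = [&& 0 < x, admissible x & ab_partition_le x s].
Proof.
by have := ab_partition_leE x (x :: s); rewrite /= leqnn andbT => <-.
Qed.

Fixpoint npart_ab_le (m l : nat) : nat :=
  if l is l'.+1 then \sum_(p < m.+1 | (0 < p) && admissible p) npart_ab_le p l'
  else 1.

Fixpoint nadmissible (m : nat) : nat :=
  if m is m'.+1 then nadmissible m' + admissible m'.+1 else 0.

Lemma npart_ab_leSS m l :
  npart_ab_le m.+1 l.+1 = npart_ab_le m l.+1 + admissible m.+1 * npart_ab_le m.+1 l.
Proof.
rewrite /= big_mkcond big_ord_recr /= -big_mkcond.
by case: admissible; rewrite ?mul1n.
Qed.

Lemma npart_ab_le_binom m l : npart_ab_le m l = 'C(nadmissible m + l - 1, l).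
Proof.
elim: m l => [|m IHm] l.
  by case: l => [|l] //=; rewrite big_mkcond big_ord_recr big_ord0 /= bin_small //; lia.
elim: l => [|l IHl]; first by rewrite bin0.
rewrite npart_ab_leSS IHm IHl /=; case: admissible => /=.
  set N := nadmissible m.
  have -> : N + 1 + l.+1 - 1 = (N + l).+1 by lia.
  have -> : N + 1 + l - 1 = N + l by lia.
  by rewrite binS mul1n; congr (_ + _); congr binomial; lia.
by rewrite mul0n !addn0.
Qed.

Lemma count_tuples_ab_partition_le M l m :
  m <= M -> count_tuples M l (ab_partition_le m) = npart_ab_le m l.
Proof.
elim: l m => [|l IH] m leMm.
  rewrite /count_tuples (eq_bigr (fun _ => 1)) ?sum_nat_const ?card_tuple //.
  by move=> t _; rewrite tuple0.
rewrite count_tuples_cons [RHS]/=.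
rewrite (big_ord_widen_cond M.+1 (fun p => (0 < p) && admissible p)
  (fun p => npart_ab_le p l)) //.
rewrite [RHS]big_mkcond; apply: eq_bigr => x _.
rewrite (@eq_count_tuples _ _ _
  (fun s => [&& 0 < x, x <= m & admissible x] && ab_partition_le x s)); last first.
  by move=> s; rewrite /= !andbA.
rewrite count_tuples_andl ltnS; have [xm|xm] := leqP x m; last by rewrite !andbF.
by rewrite IH ?(leq_trans xm) // !andbT /=; case: ifP => _; rewrite ?mul1n.
Qed.

Definition npart_ab (i j : nat) : nat :=
  if [&& 0 < i, 0 < j & admissible i] then npart_ab_le i j.-1 else 0.

Lemma npart_ab0l j : npart_ab 0 j = 0. Proof. by []. Qed.
Lemma npart_ab0r i : npart_ab i 0 = 0. Proof. by rewrite /npart_ab andbF. Qed.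

Lemma sum_ab_partitions_head M l (P : pred nat) :
  \sum_(t : l.+1.-tuple 'I_M.+1)
     (let s := map val t in [&& is_partition s, P (head 0 s) & parts_ab d a b s])
  = \sum_(x < M.+1 | P x) npart_ab x l.+1.
Proof.
rewrite -[LHS]/(count_tuples M l.+1
  (fun s => [&& is_partition s, P (head 0 s) & parts_ab d a b s])).
rewrite count_tuples_cons [RHS]big_mkcond; apply: eq_bigr => x _.
rewrite (@eq_count_tuples _ _ _
  (fun s => [&& P x, 0 < x & admissible x] && ab_partition_le x s)).
  rewrite count_tuples_andl count_tuples_ab_partition_le ?leq_ord // /npart_ab.
  by case: (P x); case: (0 < x); case: (admissible x); rewrite ?mul1n.
by move=> s /=; rewrite andbCA ab_partition_consE !andbA.
Qed.

Lemma ell3_npart_ab i l k : 0 < i ->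
  ell3 d a b i l.+1 k = if i + l == k then npart_ab i l.+1 else 0.
Proof.
move=> i_gt0; rewrite /ell3 card_set_sum.
rewrite (eq_bigr (fun t : l.+1.-tuple 'I_i.+1 => let s := map val t in
   [&& is_partition s, (head 0 s == i) && (i + l == k) & parts_ab d a b s] : nat))
  => [|t _]; last first.
  rewrite /perimeter /largest_part /num_parts size_map size_tuple addnS subn1 /=.
  by case: eqP => [->|]; rewrite ?andbF.
rewrite (sum_ab_partitions_head _ _ (fun x => (x == i) && (i + l == k))).
case: eqP => _; last by rewrite big_pred0 // => x; rewrite andbF.
by under eq_bigl => x do rewrite andbT; rewrite (big_pred1 ord_max).
Qed.

Lemma card_ab_partitions_perimeter n l : l <= n ->
  #|[set t : l.+1.-tuple 'I_n.+1 | let s := map val t in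
     [&& is_partition s, perimeter s == n & parts_ab d a b s]]| = npart_ab (n - l) l.+1.
Proof.
move=> le_ln; rewrite card_set_sum.
rewrite (eq_bigr (fun t : l.+1.-tuple 'I_n.+1 => let s := map val t in
   [&& is_partition s, head 0 s == n - l & parts_ab d a b s] : nat)) => [|t _].
  rewrite (sum_ab_partitions_head _ _ (pred1 (n - l))) (big_pred1 (inord (n - l))) //.
    by rewrite inordK // ltnS leq_subr.
  by move=> x; rewrite /= -val_eqE /= inordK // ltnS leq_subr.
rewrite /perimeter /largest_part /num_parts size_map size_tuple addnS subn1 /=.
by congr [&& _, _ & _]; apply/eqP/eqP; lia.
Qed.

Lemma ell_diag_sum n : 0 < n -> ell d a b n = diag_sum npart_ab n.+1.
Proof.
move=> n_gt0; rewrite /ell big_ord_recl card_set_sum big1 => [|t _]; last first.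
  by rewrite tuple0 /perimeter /= (_ : 0 + 0 - 1 == n = false) ?andbF //; apply/eqP; lia.
rewrite /diag_sum big_ord_recr big_ord_recl /= subnn npart_ab0l npart_ab0r add0n addn0.
rewrite [RHS](reindex_inj rev_ord_inj); apply: eq_bigr => l _ /=.
rewrite card_ab_partitions_perimeter 1?ltnW //; have := ltn_ord l.
by rewrite /bump /= => lt_ln; congr npart_ab; lia.
Qed.

End Counting.

Lemma eqn_mod_range n x y : 0 < x <= n -> 0 < y <= n -> (x == y %[mod n]) = (x == y).
Proof.
move=> /andP[x_gt0 le_xn] /andP[y_gt0 le_yn].
have modE z : z <= n -> z %% n = if z == n then 0 else z.
  by move=> le_zn; case: eqVneq => [->|ne]; rewrite ?modnn // modn_small // ltn_neqAle ne.
rewrite !modE //; case: (eqVneq x n) => [ex|nx]; case: (eqVneq y n) => [ey|ny] /=;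
  by apply/eqP/eqP; lia.
Qed.

Section Recurrence.

Variables d a b : nat.

Local Notation admissible := (admissible d a b).
Local Notation nadmissible := (nadmissible d a b).
Local Notation npart_ab := (npart_ab d a b).

Lemma admissibleDd p : admissible (p + d) = admissible p.
Proof. by rewrite /admissible modnDr. Qed.

Lemma nadmissible_gt0 p : 0 < p -> admissible p -> 0 < nadmissible p.
Proof. by case: p => // p _ /= ->; rewrite addn1. Qed.

Lemma npart_abE i j :
  0 < i -> admissible i -> npart_ab i j.+1 = 'C(nadmissible i + j - 1, j).
Proof. by move=> i_gt0 adm_i; rewrite /npart_ab i_gt0 adm_i npart_ab_le_binom. Qed.

Lemma npart_ab_nadm i j : ~~ admissible i -> npart_ab i j = 0.
Proof. by move/negbTE => adm_i; rewrite /npart_ab adm_i !andbF. Qed.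

Hypotheses (a_gt0 : 0 < a) (lt_ab : a < b) (le_bd : b <= d).

Lemma admissible_small p : 0 < p <= d -> admissible p = (p == a) || (p == b).
Proof.
have a_range : 0 < a <= d by apply/andP; lia.
have b_range : 0 < b <= d by apply/andP; lia.
by move=> p_range; rewrite /admissible !eqn_mod_range.
Qed.

Lemma nadmissible_small m : m <= d -> nadmissible m = (a <= m) + (b <= m).
Proof.
elim: m => [|m IH] le_md /=; first lia.
by rewrite IH ?admissible_small ?(ltnW le_md) //; lia.
Qed.

Lemma nadmissibleDd m : nadmissible (m + d) = (nadmissible m).+2.
Proof.
elim: m => [|m IH]; first by rewrite add0n nadmissible_small //=; lia.
by rewrite addSn /= IH -addSn admissibleDd.
Qed.

Lemma npart_ab_a j : npart_ab a j = (0 < j).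
Proof.
case: j => [|j]; first by rewrite npart_ab0r.
have a_admissible : admissible a by rewrite /admissible eqxx.
rewrite npart_abE // nadmissible_small; last by apply: ltnW (leq_trans lt_ab le_bd).
by rewrite leqnn leqNgt lt_ab add1n subn1 binn.
Qed.

Lemma npart_ab_b j : npart_ab b j = j.
Proof.
case: j => [|j]; first by rewrite npart_ab0r.
have b_admissible : admissible b by rewrite /admissible eqxx orbT.
rewrite npart_abE ?nadmissible_small //; last exact: ltn_trans a_gt0 lt_ab.
by rewrite leqnn (ltnW lt_ab) add1n subn1 binSn.
Qed.

Lemma npart_ab_recDd p j : 0 < p -> admissible p ->
  npart_ab (p + d) j + npart_ab (p + d) (j - 2)
  = 2 * npart_ab (p + d) (j - 1) + npart_ab p j.
Proof.
move=> p_gt0 adm_p.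
have adm_pd : admissible (p + d) by rewrite admissibleDd.
have pd_gt0 : 0 < p + d by rewrite addn_gt0 p_gt0.
have [m Np] : exists m, nadmissible p = m.+1.
  by case: (nadmissible p) (nadmissible_gt0 p_gt0 adm_p) => // m; exists m.
have Npd : nadmissible (p + d) = m.+3 by rewrite nadmissibleDd Np.
case: j => [|[|[|k]]];
  rewrite ?npart_ab0r //= ?subSS ?subn0 ?npart_ab0r !npart_abE // Np Npd.
- by rewrite !bin0.
- by rewrite bin0 !bin1; lia.
- by rewrite !addSn !addnS !subn1 /= bin_second_difference.
Qed.

Lemma npart_ab_rec i j :
  npart_ab i j + npart_ab i (j - 2) + ((i == a) && (j == 2))
  = 2 * npart_ab i (j - 1) + npart_ab (i - d) j
    + ((i == a) && (j == 1)) + ((i == b) && (j == 1)).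
Proof.
case: (posnP i) => [->|i_gt0]; first by rewrite sub0n !npart_ab0l; lia.
have [le_id|lt_di] := leqP i d.
  rewrite (_ : i - d = 0) ?npart_ab0l; last by apply/eqP; rewrite subn_eq0.
  case: (boolP (admissible i)) => [|nadm_i].
    rewrite admissible_small ?i_gt0 // => /orP[]/eqP->.
      by rewrite !npart_ab_a eqxx (ltn_eqF lt_ab) /=; lia.
    by rewrite !npart_ab_b eqxx (gtn_eqF lt_ab) /=; lia.
  have [-> ->] : (i == a) = false /\ (i == b) = false.
    by split; apply: contraNF nadm_i => /eqP->; rewrite /admissible eqxx ?orbT.
  by rewrite !npart_ab_nadm.
have [-> ->] : (i == a) = false /\ (i == b) = false by split; apply/eqP; lia.
rewrite /= !addn0 -(subnK (ltnW lt_di)) addnK.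
case: (boolP (admissible (i - d))) => [adm|nadm].
  by rewrite npart_ab_recDd ?subn_gt0.
by rewrite !npart_ab_nadm ?admissibleDd.
Qed.

Lemma diag_sum_npart_ab_rec s :
  diag_sum npart_ab s + diag_sum npart_ab (s - 2) + (a + 2 == s)
  = 2 * diag_sum npart_ab (s - 1) + diag_sum npart_ab (s - d)
    + (a + 1 == s) + (b + 1 == s).
Proof.
have f_i0 := npart_ab0r d a b; have f_0j := npart_ab0l d a b.
have : \sum_(i < s.+1) (npart_ab i (s - i) + npart_ab i (s - i - 2)
                        + ((i == a :> nat) && (s - i == 2)))
     = \sum_(i < s.+1) (2 * npart_ab i (s - i - 1) + npart_ab (i - d) (s - i)
                        + ((i == a :> nat) && (s - i == 1))
                        + ((i == b :> nat) && (s - i == 1))).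
  by apply: eq_bigr => i _; apply: npart_ab_rec.
rewrite !big_split big1_eq /= !diag_sum_subr // diag_sum_subl // !sum_diag_pulse.
rewrite -/(diag_sum npart_ab s); lia.
Qed.

End Recurrence.

Section Series.

Local Open Scope ring_scope.

Lemma mul3Dl f1 f2 g i j k : mul3 (add3 f1 f2) g i j k = mul3 f1 g i j k + mul3 f2 g i j k.
Proof.
rewrite /mul3 -big_split; apply: eq_bigr => i1 _; rewrite -big_split.
by apply: eq_bigr => j1 _; rewrite -big_split; apply: eq_bigr => k1 _; rewrite mulrDl.
Qed.

Lemma mul1Dl f1 f2 g n : mul1 (add1 f1 f2) g n = mul1 f1 g n + mul1 f2 g n.
Proof. by rewrite /mul1 -big_split; apply: eq_bigr => i _; rewrite mulrDl. Qed.

Lemma sum_ord_pulse (R : nmodType) n e (F : nat -> R) :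
  \sum_(i < n) (if i == e :> nat then F i else 0) = if (e < n)%N then F e else 0.
Proof. by rewrite -big_mkcond big_ord1_eq. Qed.

Lemma mul3_mono c e1 e2 e3 g i j k :
  mul3 (mono3 c e1 e2 e3) g i j k =
  if [&& e1 <= i, e2 <= j & e3 <= k]%N then c * g (i - e1)%N (j - e2)%N (k - e3)%N else 0.
Proof.
pose G3 i1 j1 k1 := c * g (i - i1)%N (j - j1)%N (k - k1)%N.
pose G2 i1 j1 := if (e3 < k.+1)%N then G3 i1 j1 e3 else 0.
pose G1 i1 := if (e2 < j.+1)%N then G2 i1 e2 else 0.
transitivity (\sum_(i1 < i.+1) if i1 == e1 :> nat then G1 i1 else 0).
  apply: eq_bigr => i1 _; rewrite /mono3; case: eqP => _; last first.
    by rewrite big1 // => j1 _; rewrite big1 // => k1 _; rewrite mul0r.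
  rewrite /G1 -(sum_ord_pulse _ _ (G2 i1)); apply: eq_bigr => j1 _.
  case: eqP => _; last by rewrite big1 // => k1 _; rewrite mul0r.
  rewrite /G2 -(sum_ord_pulse _ _ (G3 i1 j1)); apply: eq_bigr => k1 _.
  by case: eqP; rewrite ?mul0r.
rewrite (sum_ord_pulse _ _ G1) /G1 /G2 /G3 !ltnS.
by case: (e1 <= i)%N; case: (e2 <= j)%N; case: (e3 <= k)%N.
Qed.

Lemma mul1_mono c e g n :
  mul1 (mono1 c e) g n = if (e <= n)%N then c * g (n - e)%N else 0.
Proof.
rewrite /mul1 -ltnS -(sum_ord_pulse _ _ (fun k => c * g (n - k)%N)).
by apply: eq_bigr => k _; rewrite /mono1; case: eqP; rewrite ?mul0r.
Qed.

Lemma mono3_diag c e1 e2 e3 i j k : e3.+1 = (e1 + e2)%N ->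
  mono3 c e1 e2 e3 i j k
  = if k.+1 == (i + j)%N then (if (i == e1) && (j == e2) then c else 0) else 0.
Proof.
rewrite /mono3 => He; case: eqP => [->|_]; case: eqP => [->|_] /=; rewrite ?if_same //.
by rewrite -He eqSS.
Qed.

Lemma gen3_diag d a b i j k :
  gen3 d a b i j k = if k.+1 == (i + j)%N then (npart_ab d a b i j)%:Z else 0.
Proof.
rewrite /gen3; case: (posnP i) => [->|i_gt0]; first by rewrite npart_ab0l if_same.
case: j => [|l]; first by rewrite npart_ab0r !if_same andbF.
case: k => [|k]; first by rewrite andbF ifN_eqC // addnS eqSS -lt0n addn_gt0 i_gt0.
by rewrite /= ell3_npart_ab // addnS eqSS eq_sym; case: ifP.
Qed.

Lemma mul3_mono_gen3 d a b c e1 e2 e3 i j k : e3 = (e1 + e2)%N ->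
  mul3 (mono3 c e1 e2 e3) (gen3 d a b) i j k
  = if k.+1 == (i + j)%N then c * (npart_ab d a b (i - e1) (j - e2))%:Z else 0.
Proof.
move=> ->; rewrite mul3_mono.
case: leqP => [le1|lt1]; last first.
  by case: eqP => // _; rewrite (_ : i - e1 = 0)%N ?npart_ab0l ?mulr0 //; lia.
case: leqP => [le2|lt2]; last first.
  by case: eqP => // _; rewrite (_ : j - e2 = 0)%N ?npart_ab0r ?mulr0 //; lia.
case: leqP => [le3|lt3].
  rewrite gen3_diag (_ : ((k - (e1 + e2)).+1 == (i - e1 + (j - e2)))%N = (k.+1 == i + j)%N).
    by case: ifP; rewrite ?mulr0.
  by apply/eqP/eqP; lia.
by case: eqP => // E; rewrite (_ : i - e1 = 0)%N ?npart_ab0l ?mulr0 //; lia.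
Qed.

Lemma mul3_den3_gen3 d a b i j k : (0 < a)%N -> (a < b)%N -> (b <= d)%N ->
  mul3 (den3 d) (gen3 d a b) i j k = num3 a b i j k.
Proof.
move=> a_gt0 lt_ab le_bd.
rewrite /den3 !mul3Dl !mul3_mono_gen3 ?addn0 // /num3 /add3.
rewrite !mono3_diag ?addn1 ?addn2 // !subn0.
case: eqP => _; last by rewrite !addr0.
have := npart_ab_rec a_gt0 lt_ab le_bd i j.
move: (npart_ab d a b i j) (npart_ab d a b i (j - 1)) (npart_ab d a b i (j - 2)).
move: (npart_ab d a b (i - d) j) => u x y z.
case: ((i == a) && (j == 1%N)); case: ((i == a) && (j == 2%N)); case: ((i == b) && (j == 1%N));
  rewrite /=; lia.
Qed.

Lemma gen1_diag d a b n : gen1 d a b n = (diag_sum (npart_ab d a b) n.+1)%:Z.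
Proof.
case: n => [|n]; last by rewrite /gen1 /= ell_diag_sum.
by rewrite /diag_sum !big_ord_recl big_ord0 /= npart_ab0l npart_ab0r.
Qed.

Lemma mul1_mono_gen1 d a b c e n :
  mul1 (mono1 c e) (gen1 d a b) n = c * (diag_sum (npart_ab d a b) (n.+1 - e))%:Z.
Proof.
rewrite mul1_mono; case: leqP => [le_en|lt_ne]; first by rewrite gen1_diag subSn.
rewrite (_ : n.+1 - e = 0)%N; last lia.
by rewrite /diag_sum big_ord1 npart_ab0l mulr0.
Qed.

Lemma mul1_den1_gen1 d a b n : (0 < a)%N -> (a < b)%N -> (b <= d)%N ->
  mul1 (den1 d) (gen1 d a b) n = num1 a b n.
Proof.
move=> a_gt0 lt_ab le_bd.
rewrite /den1 !mul1Dl !mul1_mono_gen1 subn0 /num1 /add1 /mono1.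
have := diag_sum_npart_ab_rec a_gt0 lt_ab le_bd n.+1.
rewrite (_ : (a + 1 == n.+1) = (n == a))%N; last by apply/eqP/eqP; lia.
rewrite (_ : (a + 2 == n.+1) = (n == a.+1))%N; last by apply/eqP/eqP; lia.
rewrite (_ : (b + 1 == n.+1) = (n == b))%N; last by apply/eqP/eqP; lia.
move: (diag_sum _ n.+1) (diag_sum _ (n.+1 - 1)) (diag_sum _ (n.+1 - 2)).
move: (diag_sum _ (n.+1 - d)) => u x y z.
by case: (n == a); case: (n == a.+1); case: (n == b); rewrite /=; lia.
Qed.

End Series.

(* [hd] is redundant: [0 < a < b <= d] already forces [2 <= d]. *)
Theorem mainTheorem8 (d a b : nat) (hd : 2 <= d) (ha : 0 < a) (hab : a < b)
    (hbd : b <= d) :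
  mul3 (den3 d) (gen3 d a b) = num3 a b /\
  mul1 (den1 d) (gen1 d a b) = num1 a b.
Proof.
split.
  by do 3 apply: functional_extensionality => ?; apply: mul3_den3_gen3.
by apply: functional_extensionality => n; apply: mul1_den1_gen1.
Qed.
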